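(* Let $n\ge2$ and $Q\in SU_n$ with eigenvalues $\mu_1,\dots,\mu_n$ (with multiplicity) ordered so that $\arg(\mu_1)\le\cdots\le\arg(\mu_n)$, and let $\zeta(Q):=\frac1{2\pi}\sum_{j=1}^n\arg(\mu_j)\in\mathbb{Z}$. Let $W_Q:=\{\underline{k}=(k_1,\dots,k_n)\in\mathbb{Z}^n:\sum_{j=1}^nk_j=-\zeta(Q)\}$, $\psi_Q:W_Q\to\mathbb{R}$, $\psi_Q(\underline{k})=\sum_{j=1}^n(\arg(\mu_j)+2k_j\pi)^2$, $\Delta_Q(\underline{k}):=\max\{k_1,\dots,k_n\}-\min\{k_1,\dots,k_n\}$, $Z_Q:=\{\underline{k}\in W_Q:\Delta_Q(\underline{k})\le1\}$, and $m(Q):=\min\{\psi_Q(\underline{k}):\underline{k}\in W_Q\}$. Then $\psi_Q(\underline{k})>m(Q)$ for every $\underline{k}\in W_Q\setminus Z_Q$; consequently $m(Q)=\min\{\psi_Q(\underline{k}):\underline{k}\in Z_Q\}$.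
   Context: $SU_n$ is the special unitary group and $\arg(z)\in(-\pi,\pi]$ the principal argument. (The quantity $m(Q)$ coincides with $\min\{\mathrm{tr}(XX^* ):X\in\mathfrak{su}_n,\ \exp(X)=Q\}$.) *)

From mathcomp Require Import all_boot all_order all_algebra.
From mathcomp Require Import complex.
From mathcomp Require Import reals trigo.
Set Implicit Arguments. Unset Strict Implicit. Unset Printing Implicit Defensive.
Import Order.TTheory GRing.Theory Num.Theory.
Local Open Scope ring_scope.

(* Principal argument arg z in (-pi, pi]; arg 0 := 0 (irrelevant here since
   eigenvalues of a unitary matrix are nonzero). *)
Definition carg (R : realType) (z : R[i]) : R :=
  let a := complex.Re z in
  let b := complex.Im z in
  let r := Num.sqrt (a ^+ 2 + b ^+ 2) in
  if r == 0 then 0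
  else if 0 <= b then acos (a / r) else - acos (a / r).

Definition is_SU (R : realType) (n : nat) (Q : 'M[R[i]]_n) : Prop :=
  Q *m (map_mx (fun z => z^*) Q)^T = 1%:M /\ \det Q = 1.

Definition eigen_list (R : realType) (n : nat) (Q : 'M[R[i]]_n)
  (mu : 'I_n -> R[i]) : Prop :=
  char_poly Q = \prod_(j < n) ('X - (mu j)%:P).

Definition zetaQ (R : realType) (n : nat) (mu : 'I_n -> R[i]) : R :=
  (\sum_(j < n) carg (mu j)) / (2 * pi).

Definition W_Q (R : realType) (n : nat) (mu : 'I_n -> R[i])
  (k : 'I_n -> int) : Prop :=
  ((\sum_(j < n) k j)%:~R : R) = - zetaQ mu.

Definition psi_Q (R : realType) (n : nat) (mu : 'I_n -> R[i])
  (k : 'I_n -> int) : R :=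
  \sum_(j < n) (carg (mu j) + 2 * (k j)%:~R * pi) ^+ 2.

Definition Delta_Q (n : nat) (k : 'I_n -> int) : int :=
  let s := [seq k i | i <- enum 'I_n] in
  \big[Num.max/head 0 s]_(x <- s) x - \big[Num.min/head 0 s]_(x <- s) x.

Definition Z_Q (R : realType) (n : nat) (mu : 'I_n -> R[i])
  (k : 'I_n -> int) : Prop :=
  W_Q mu k /\ Delta_Q k <= 1.

Definition is_min_on (R : realType) (n : nat) (P : ('I_n -> int) -> Prop)
  (f : ('I_n -> int) -> R) (m : R) : Prop :=
  (exists k, P k /\ f k = m) /\ (forall k, P k -> m <= f k).

From mathcomp Require Import all_boot all_order all_algebra.
From mathcomp Require Import complex.
From mathcomp Require Import reals trigo.
From mathcomp Require Import ring lra zify.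
Set Implicit Arguments. Unset Strict Implicit. Unset Printing Implicit Defensive.
Import Order.TTheory GRing.Theory Num.Theory.
Local Open Scope ring_scope.

(** The eigenvalues multiply to [det Q = 1], so their arguments sum to a
   multiple of [2 pi] and [W_Q] is the set of integer vectors with a fixed sum.
   If [k_a - k_b >= 2], moving one unit from [k_a] to [k_b] keeps the sum and
   lowers [psi_Q], because the arguments lie in [(-pi, pi]]; it also lowers
   [sum_j k_j^2], so repeating it ends at a vector with [Delta <= 1].  Such
   vectors with a given sum [s] only take the values [s %/ n] and [s %/ n + 1],
   so there are finitely many of them and [psi_Q] has a minimum among them,
   which is then the minimum over [W_Q], strictly below every value outside
   [Z_Q]. *)

Section PolarForm.
Variable R : realType.
Implicit Types (x y : R) (z : R[i]).

Definition expi x : R[i] := (cos x +i* sin x)%C.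

Lemma expi0 : expi 0 = 1.
Proof. by rewrite /expi cos0 sin0. Qed.

Lemma expiD x y : expi (x + y) = expi x * expi y.
Proof. by rewrite /expi cosD sinD /=; congr (_ +i* _)%C; ring. Qed.

Lemma expi_sum {I : Type} (r : seq I) (f : I -> R) :
  expi (\sum_(i <- r) f i) = \prod_(i <- r) expi (f i).
Proof. exact: (big_morph _ expiD expi0). Qed.

Lemma carg_bounds z : - pi < carg z <= pi.
Proof.
rewrite /carg; set a := complex.Re z; set b := complex.Im z; set r := Num.sqrt _.
have pi_gt0 := pi_gt0 R.
case: eqP => [_ | /eqP r_neq0]; first lra.
have r_gt0 : 0 < r by rewrite lt_def r_neq0 sqrtr_ge0.
have rr : r ^+ 2 = a ^+ 2 + b ^+ 2 by rewrite sqr_sqrtr // addr_ge0 // sqr_ge0.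
have a_bound : -1 <= a / r <= 1.
  by rewrite ler_pdivlMr // ler_pdivrMr //; apply/andP; split; nra.
have := acos_ge0 a_bound; have := acos_lepi a_bound.
case: ifPn => [_ | b_lt0]; first lra.
have : acos (a / r) < pi.
  apply: acos_ltpi; case/andP: a_bound => _ -> ; rewrite andbT ltr_pdivlMr //.
  by rewrite -ltNge in b_lt0; nra.
lra.
Qed.

Lemma polar_carg z : z = `|z| * expi (carg z).
Proof.
case: z => a b; rewrite normc_def /carg /expi /=; set r := Num.sqrt _.
have rr : r ^+ 2 = a ^+ 2 + b ^+ 2 by rewrite sqr_sqrtr // addr_ge0 // sqr_ge0.
case: eqP => [r_eq0 | /eqP r_neq0].
  have /eqP : a ^+ 2 + b ^+ 2 = 0 by rewrite -rr r_eq0 expr0n.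
  rewrite paddr_eq0 ?sqr_ge0 // !sqrf_eq0 => /andP[/eqP -> /eqP ->].
  by rewrite r_eq0 /=; congr (_ +i* _)%C; ring.
have r_gt0 : 0 < r by rewrite lt_def r_neq0 sqrtr_ge0.
have a_bound : -1 <= a / r <= 1.
  by rewrite ler_pdivlMr // ler_pdivrMr //; apply/andP; split; nra.
have cos_acos : cos (acos (a / r)) = a / r by rewrite acosK // in_itv /=.
have sin_acos : sin (acos (a / r)) = `|b| / r.
  rewrite sin_acos // -[`|b| / r]ger0_norm ?divr_ge0 ?(ltW r_gt0) // -sqrtr_sqr.
  congr Num.sqrt.
  rewrite !expr_div_n -normrX ger0_norm ?sqr_ge0 // -{1}(divff (expf_neq0 2 r_neq0)) rr.
  by field; rewrite -rr expf_neq0.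
case: ifPn => b_ge0; rewrite ?cosN ?sinN cos_acos sin_acos.
  by rewrite ger0_norm //; simpc; f_equal; rewrite mulrC divfK.
rewrite ltr0_norm ?ltNge //.
by simpc; f_equal; rewrite mulrC divfK.
Qed.

Lemma prod_polar {I : Type} (r : seq I) (z : I -> R[i]) :
  \prod_(i <- r) z i = `|\prod_(i <- r) z i| * expi (\sum_(i <- r) carg (z i)).
Proof.
rewrite expi_sum normr_prod -big_split /=.
by apply: eq_bigr => i _; rewrite -polar_carg.
Qed.

Lemma cosDz2pi x (N : int) : cos (x + N%:~R * (2 * pi)) = cos x.
Proof.
have cosDn2pi y (m : nat) : cos (y + m%:R * (2 * pi)) = cos y.
  by rewrite !mulr_natl (periodicn (@cosD2pi R)).
case: N => m; first exact: cosDn2pi.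
by rewrite NegzE mulNr -(cosDn2pi (x - m.+1%:R * (2 * pi)) m.+1) subrK.
Qed.

Lemma cos_eq1 x : cos x = 1 -> exists N : int, x = N%:~R * (2 * pi).
Proof.
move=> cosx1; have pi_gt0 := pi_gt0 R.
pose N := Num.floor (x / (2 * pi)); exists N.
pose y := x - N%:~R * (2 * pi).
have /andP[Nle ltN1] := floor_itv (x / (2 * pi)).
rewrite ler_pdivlMr ?ltr_pdivrMr ?mulr_gt0 // intrD in Nle ltN1.
have y_ge0 : 0 <= y by rewrite subr_ge0.
have y_lt2pi : y < 2 * pi by rewrite ltrBlDr; lra.
have cosy1 : cos y = 1 by rewrite -cosx1 -(cosDz2pi y N) subrK.
suff y0 : y = 0 by apply/eqP; rewrite -subr_eq0 -/y y0.
have [y_lepi|pi_lty] := lerP y pi.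
  by apply: cos_inj; rewrite ?in_itv /= ?y_ge0 ?y_lepi ?lexx ?pi_ge0 ?cosy1 ?cos0.
suff : 2 * pi - y = 0 by lra.
apply: cos_inj; rewrite ?in_itv /= ?lexx ?pi_ge0 //; first by apply/andP; split; lra.
by rewrite -[2 * pi]mul1r -[1]/(1%:~R) addrC cosDz2pi cosN cosy1 cos0.
Qed.

Lemma sum_carg_prod_eq1 {I : Type} (r : seq I) (z : I -> R[i]) :
  \prod_(i <- r) z i = 1 -> exists N : int, \sum_(i <- r) carg (z i) = N%:~R * (2 * pi).
Proof.
move=> prod1; apply: cos_eq1.
by have := prod_polar r z; rewrite prod1 normr1 mul1r => -[].
Qed.
End PolarForm.

Lemma det_prod_eigen (F : comNzRingType) n (A : 'M[F]_n) (mu : 'I_n -> F) :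
  char_poly A = \prod_(j < n) ('X - (mu j)%:P) -> \det A = \prod_(j < n) mu j.
Proof.
move=> charA; apply: (can_inj (signrMK n)).
rewrite -char_poly_det charA -horner_coef0 horner_prod.
under eq_bigr do rewrite hornerXsubC sub0r.
by rewrite prodrN card_ord.
Qed.

Lemma zetaQ_int (R : realType) n (Q : 'M[R[i]]_n) (mu : 'I_n -> R[i]) :
  \det Q = 1 -> eigen_list Q mu -> exists N : int, zetaQ mu = N%:~R.
Proof.
move=> detQ /det_prod_eigen; rewrite detQ => /esym/sum_carg_prod_eq1[N sumN].
by exists N; rewrite /zetaQ sumN mulfK // mulf_neq0 ?pnatr_eq0 ?gt_eqF ?pi_gt0.
Qed.

Section IntegerVectors.
Variable n : nat.
Implicit Types k : 'I_n -> int.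

Definition balanced k : bool := [forall i, forall j, k i - k j <= 1].

Lemma balancedP k : reflect (forall i j, k i - k j <= 1) (balanced k).
Proof.
apply: (iffP forallP) => [bal i j | bal i]; first exact: (forallP (bal i) j).
by apply/forallP => j; apply: bal.
Qed.

Definition transfer k (a b : 'I_n) : 'I_n -> int :=
  fun j => k j - (j == a)%:R + (j == b)%:R.

Lemma sum_transfer k a b : \sum_j transfer k a b j = \sum_j k j.
Proof.
have sum_delta c : \sum_j ((j == c)%:R : int) = 1.
  by rewrite (bigD1 c) //= eqxx big1 ?addr0 // => j /negbTE ->.
by rewrite /transfer !big_split sumrN /= !sum_delta subrK.
Qed.

Lemma sum_transfer_sub (V : zmodType) (F : 'I_n -> int -> V) k a b : a != b ->
  \sum_j F j (transfer k a b j) - \sum_j F j (k j) =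
  F a (k a - 1) - F a (k a) + (F b (k b + 1) - F b (k b)).
Proof.
move=> neq_ab; rewrite -sumrB (bigD1 a) //= (bigD1 b) 1?eq_sym //= big1 ?addr0.
  by rewrite /transfer !eqxx (negbTE neq_ab) eq_sym (negbTE neq_ab) addr0 subr0.
by move=> j /andP[/negbTE ja /negbTE jb]; rewrite /transfer ja jb subr0 addr0 subrr.
Qed.

Definition sqnorm k : int := \sum_j k j ^+ 2.

Lemma sqnorm_ge0 k : 0 <= sqnorm k.
Proof. by apply: sumr_ge0 => j _; apply: sqr_ge0. Qed.

Lemma sqnorm_transfer_lt k a b : 2 <= k a - k b -> sqnorm (transfer k a b) < sqnorm k.
Proof.
move=> gap; have neq_ab : a != b by apply: contraTneq gap => ->; rewrite subrr.
rewrite -subr_lt0 /sqnorm (sum_transfer_sub (fun _ x => x ^+ 2)) //.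
by rewrite !expr2; lia.
Qed.

Lemma not_balanced_gap k : ~~ balanced k -> exists a b, 2 <= k a - k b.
Proof. by move=> /forallPn[a /forallPn[b]]; rewrite -ltNge => gap; exists a, b; lia. Qed.

Lemma balanced_floor (n_gt0 : (0 < n)%N) k i :
  (forall j, k i <= k j) -> balanced k -> k i = ((\sum_j k j) %/ n)%Z.
Proof.
move=> min_i /balancedP bal; set s := \sum_j k j.
have sum_const (c : int) : \sum_(j < n) c = c * n.
  by rewrite sumr_const card_ord -mulr_natr natz.
have lb : k i * n <= s by rewrite -sum_const; apply: ler_sum => j _.
have ub : 1 <= \sum_j (k i + 1 - k j).
  rewrite (bigD1 i) //= [k i + 1 - k i]addrC addKr lerDl.
  by apply: sumr_ge0 => j _; have := bal j i; lia.
rewrite sumrB sum_const -/s in ub.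
rewrite -[s](subrK (k i * n)) addrC divzMDl ?divz_small ?addr0 //; first lia.
by rewrite eqz_nat -lt0n.
Qed.

Lemma balanced_bits (n_gt0 : (0 < n)%N) k : balanced k ->
  exists b : {ffun 'I_n -> bool}, forall j, k j = ((\sum_j k j) %/ n)%Z + b j.
Proof.
move=> bal; case: (@arg_minP _ _ _ (Ordinal n_gt0) xpredT k isT) => i _ min_i.
rewrite -(balanced_floor n_gt0 (fun j => min_i j isT) bal).
exists [ffun j => k j != k i] => j; rewrite ffunE.
have := min_i j isT; have := balancedP _ bal j i.
by case: eqP => [-> | ] /=; lia.
Qed.

End IntegerVectors.

Lemma Delta_Q_le1 n (k : 'I_n -> int) : (0 < n)%N -> (Delta_Q k <= 1) = balanced k.
Proof.
case: n k => // n k _; rewrite /Delta_Q !big_map enum_ordSl /=.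
apply/idP/balancedP => [Delta_le1 i j | bal].
  apply: le_trans Delta_le1; apply: lerB; [exact: le_bigmax_cond | exact: bigmin_le_cond].
have bal_le i j : k i - 1 <= k j by have := bal i j; lia.
rewrite lerBlDr; apply/bigmax_leP; split => [|i _];
  by rewrite -lerBlDl; apply/bigmin_geP; split => [|j _]; apply: bal_le.
Qed.

Section Balancing.
Variables (R : realType) (n : nat) (theta : 'I_n -> R).
Implicit Types k : 'I_n -> int.

Definition psi k : R := \sum_j (theta j + 2 * (k j)%:~R * pi) ^+ 2.

Hypothesis theta_range : forall j, - pi < theta j <= pi.

Lemma psi_transfer_lt k a b : 2 <= k a - k b -> psi (transfer k a b) < psi k.
Proof.
move=> gap; have neq_ab : a != b by apply: contraTneq gap => ->; rewrite subrr.
rewrite -subr_lt0 /psi (sum_transfer_sub (fun j x => (theta j + 2 * x%:~R * pi) ^+ 2)) //.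
rewrite intrB intrD; set u := (k a)%:~R; set v := (k b)%:~R.
have gapR : 2 <= u - v by move: gap; rewrite -(ler_int R) intrB.
(* negative since [theta b - theta a < 2 pi <= 2 pi (u - v - 1)] *)
have -> : (theta a + 2 * (u - 1%:~R) * pi) ^+ 2 - (theta a + 2 * u * pi) ^+ 2 +
    ((theta b + 2 * (v + 1%:~R) * pi) ^+ 2 - (theta b + 2 * v * pi) ^+ 2) =
    4 * pi * (theta b - theta a - 2 * pi * (u - v - 1)) by ring.
have pi_gt0 := pi_gt0 R; have := theta_range a; have := theta_range b.
have slack : 0 <= pi * (u - v - 2) by rewrite mulr_ge0 ?subr_ge0 // ltW.
rewrite pmulr_rlt0 ?mulr_gt0 //; lra.
Qed.

Lemma balanced_descent k : exists k',
  [/\ balanced k', \sum_j k' j = \sum_j k j, psi k' <= psi k &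
      ~~ balanced k -> psi k' < psi k].
Proof.
have [N] : exists N : nat, sqnorm k < N%:Z by exists `|sqnorm k|.+1; lia.
elim: N k => [|N IHN] k sqnorm_lt; first by have := sqnorm_ge0 k; lia.
have [bal_k | /not_balanced_gap[a [b gap]]] := boolP (balanced k).
  by exists k; rewrite bal_k.
have [|k' [bal' sum' le' _]] := IHN (transfer k a b).
  by have := sqnorm_transfer_lt gap; lia.
have lt_k := psi_transfer_lt gap.
exists k'; split => //; [by rewrite sum' sum_transfer | exact: le_trans (ltW lt_k) | ].
by move=> _; exact: le_lt_trans lt_k.
Qed.

Lemma psi_min_among_balanced (n_gt0 : (0 < n)%N) k0 : balanced k0 -> exists km,
  [/\ balanced km, \sum_j km j = \sum_j k0 j &
       forall k, balanced k -> \sum_j k j = \sum_j k0 j -> psi km <= psi k].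
Proof.
move=> bal0; set s := \sum_j k0 j.
pose bits (b : {ffun 'I_n -> bool}) j := (s %/ n)%Z + b j.
have bits_of_bal k : balanced k -> \sum_j k j = s -> exists b, forall j, k j = bits b j.
  move=> bal sum_s; have [b eq_k] := balanced_bits n_gt0 bal.
  by rewrite sum_s in eq_k; exists b.
pose has_sum_s b := \sum_j bits b j == s.
have [b0 eq_k0] := bits_of_bal k0 bal0 erefl.
have b0_sum_s : has_sum_s b0 by rewrite /has_sum_s -(eq_bigr _ (fun j _ => eq_k0 j)).
case: (arg_minP (psi \o bits) b0_sum_s) => bm /eqP sum_bm min_bm.
exists (bits bm); split => // [|k bal sum_k].
  by apply/balancedP => i j; rewrite /bits; case: (bm i); case: (bm j) => /=; lia.
have [b eq_k] := bits_of_bal k bal sum_k.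
have -> : psi k = psi (bits b) by apply: eq_bigr => j _; rewrite eq_k.
by apply: min_bm; rewrite /has_sum_s -sum_k; apply/eqP/eq_bigr => j _; rewrite eq_k.
Qed.

Lemma psi_min_balanced (n_gt0 : (0 < n)%N) (s : int) : exists km,
  [/\ balanced km, \sum_j km j = s,
       forall k, \sum_j k j = s -> psi km <= psi k &
       forall k, \sum_j k j = s -> ~~ balanced k -> psi km < psi k].
Proof.
pose i0 := Ordinal n_gt0.
have [k1 [bal1 sum1 _ _]] := balanced_descent (fun j => if j == i0 then s else 0).
have [km [bal_km sum_km min_km]] := psi_min_among_balanced n_gt0 bal1.
have sum_s : \sum_j k1 j = s.
  by rewrite sum1 (bigD1 i0) //= big1 ?addr0 // => j /negbTE ->.
rewrite sum_s in sum_km min_km; exists km; split => // k sum_k.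
  have [k' [bal' sum' le' _]] := balanced_descent k.
  by apply: le_trans le'; apply: min_km; rewrite ?sum'.
have [k' [bal' sum' _ lt']] := balanced_descent k.
by move=> not_bal; apply: le_lt_trans (lt' not_bal); apply: min_km; rewrite ?sum'.
Qed.
End Balancing.

Theorem lemma2p6 (R : realType) (n : nat) (Q : 'M[R[i]]_n)
  (mu : 'I_n -> R[i]) :
  (2 <= n)%N ->
  is_SU Q ->
  eigen_list Q mu ->
  (forall i j : 'I_n, (i <= j)%N -> carg (mu i) <= carg (mu j)) ->
  exists m : R,
  is_min_on (W_Q mu) (psi_Q mu) m /\
  (forall k, W_Q mu k -> ~ Z_Q mu k -> psi_Q mu k > m) /\
  is_min_on (Z_Q mu) (psi_Q mu) m.
Proof.
move=> n_ge2 [_ detQ] eigQ _; have n_gt0 : (0 < n)%N := ltnW n_ge2.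
have [N zetaN] := zetaQ_int detQ eigQ.
have W_sum k : W_Q mu k <-> \sum_j k j = - N.
  by rewrite /W_Q zetaN -intrN; split => [/intr_inj | ->].
have Z_sum k : Z_Q mu k <-> \sum_j k j = - N /\ balanced k.
  by rewrite /Z_Q Delta_Q_le1 //; split => -[/W_sum sum_k bal].
have [km [bal_km sum_km min_km lt_km]] :=
  psi_min_balanced (fun j => carg_bounds (mu j)) n_gt0 (- N).
exists (psi_Q mu km); split; [|split].
- split=> [|k /W_sum]; [by exists km; rewrite W_sum | exact: min_km].
- move=> k /W_sum sum_k not_Z; apply: lt_km => //.
  by apply/negP => bal_k; apply/not_Z/Z_sum.
- split=> [|k /Z_sum[sum_k _]]; [by exists km; rewrite Z_sum | exact: min_km].
Qed.
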